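(* Consider the network $\Sigma$ and nonempty closed sets $\mathcal{A}_i\subset\mathbb{R}^{n_i}$, $i\in\mathbb{N}$. Assume there are $\kappa_1,\kappa_2\in\mathcal{K}_\infty$ such that one of the following two conditions holds for all $i\in\mathbb{N}$, all $\xi_i\in\mathbb{R}^{n_i}$, $\bar\xi_i\in X(I_i)$ and $\mu_i\in\mathbb{R}^{p_i}$: (a) $|f_i(\xi_i,\bar\xi_i,\mu_i)|_{\mathcal{A}_i}\le\kappa_1(|\xi_i|_{\mathcal{A}_i})+\kappa_2(|\bar\xi_i|)+\kappa_2(|\mu_i|)$; (b) $|f_i(\xi_i,\bar\xi_i,\mu_i)|_{\mathcal{A}_i}\le\kappa_1(|\xi_i|_{\mathcal{A}_i})+\kappa_2(|\bar\xi_i|_{\mathcal{A}(I_i)})+\kappa_2(|\mu_i|)$. Assume further that $(\mathcal{A}_i)_{i\in\mathbb{N}}$ is uniformly bounded, i.e. there is $C>0$ with $|z|\le C$ for all $i\in\mathbb{N}$ and all $z\in\mathcal{A}_i$. Then $\Sigma$ is well-posed.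
   Context: For each $i\in\mathbb{N}$ fix positive integers $n_i,p_i$, norms $|\cdot|$ on $\mathbb{R}^{n_i}$, $\mathbb{R}^{p_i}$, and a finite set $I_i\subset\mathbb{N}\setminus\{i\}$ such that every set $\{j\in\mathbb{N}:i\in I_j\}$ is finite. $X(I_i):=\prod_{j\in I_i}\mathbb{R}^{n_j}$ with norm $|\bar x_i|:=\sup_{j\in I_i}|x_j|$. Each $f_i:\mathbb{R}^{n_i}\times X(I_i)\times\mathbb{R}^{p_i}\to\mathbb{R}^{n_i}$ is continuous. $X$ (resp. $U$) is the space of sequences $(x_i)_{i\in\mathbb{N}}$, $x_i\in\mathbb{R}^{n_i}$ (resp. $(u_i)$, $u_i\in\mathbb{R}^{p_i}$), with $\sup_i|x_i|<\infty$, normed by $|x|_\infty=\sup_i|x_i|$. $f:\prod_i\mathbb{R}^{n_i}\times U\to\prod_i\mathbb{R}^{n_i}$ is $f(x,u)_i=f_i(x_i,(x_j)_{j\in I_i},u_i)$; the network $\Sigma$ is $x^+=f(x,u)$, and it is well-posed if $f(x,u)\in X$ for all $x\in X$, $u\in U$. $|z|_{\mathcal{A}_i}:=\inf_{y\in\mathcal{A}_i}|z-y|$; $\mathcal{A}(I_i):=\prod_{j\in I_i}\mathcal{A}_j$ and $|\bar\xi_i|_{\mathcal{A}(I_i)}:=\inf_{z\in\mathcal{A}(I_i)}|\bar\xi_i-z|$ (which equals $\max_{j\in I_i}|\xi_j|_{\mathcal{A}_j}$). $\mathcal{K}_\infty$: continuous strictly increasing unbounded functions $[0,\infty)\to[0,\infty)$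 vanishing at $0$. *)

From HB Require Import structures.
From mathcomp Require Import all_boot all_order all_algebra.
From mathcomp Require Import all_classical all_reals all_analysis.
Import Order.TTheory GRing.Theory Num.Theory.
Import numFieldNormedType.Exports.
Set Implicit Arguments. Unset Strict Implicit. Unset Printing Implicit Defensive.
Local Open Scope classical_set_scope.
Local Open Scope ring_scope.

Section NetworkDefs.
Context {R : realType}.

Definition is_norm (m : nat) (N : 'rV[R]_m -> R) : Prop :=
  [/\ (forall x, 0 <= N x), (forall x, N x = 0 -> x = 0),
      (forall (a : R) x, N (a *: x) = `|a| * N x) &
      (forall x y, N (x + y) <= N x + N y)].

Definition dist_set (m : nat) (N : 'rV[R]_m -> R) (A : set 'rV[R]_m)
  (z : 'rV[R]_m) : R := inf [set N (z - y) | y in A].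

(* class K_infinity, functions [0,oo) -> [0,oo) (given on R, only values on
   [0,oo) matter) *)
Definition K_inf (k : R -> R) : Prop :=
  [/\ k 0 = 0, {within [set x : R | 0 <= x], continuous k},
      (forall x y, 0 <= x -> x < y -> k x < k y) &
      (forall M, exists x, 0 <= x /\ M < k x)].

Definition XI (n : nat -> nat) (I : nat -> seq nat) (i : nat) : Type :=
  forall j : seq_sub (I i), 'rV[R]_(n (val j)).

(* |xb|  = sup_{j in I_i} |x_j| (0 if I_i is empty) *)
Definition XI_norm (n : nat -> nat) (I : nat -> seq nat)
  (N : forall i, 'rV[R]_(n i) -> R) (i : nat) (xb : XI n I i) : R :=
  \big[Num.max/0]_(j : seq_sub (I i)) N (val j) (xb j).

Definition XI_dist (n : nat -> nat) (I : nat -> seq nat)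
  (N : forall i, 'rV[R]_(n i) -> R) (A : forall i, set 'rV[R]_(n i))
  (i : nat) (xb : XI n I i) : R :=
  inf [set XI_norm N (fun j => xb j - z j) |
       z in [set z : XI n I i | forall j, A (val j) (z j)]].

(* continuity of f_i (with respect to the given norms; all norms on a
   finite-dimensional space induce the standard topology) *)
Definition fi_continuous (n p : nat -> nat) (I : nat -> seq nat)
  (N : forall i, 'rV[R]_(n i) -> R) (Nu : forall i, 'rV[R]_(p i) -> R)
  (i : nat) (fi : 'rV[R]_(n i) -> XI n I i -> 'rV[R]_(p i) -> 'rV[R]_(n i))
  : Prop :=
  forall x xb u (eps : R), 0 < eps -> exists2 d : R, 0 < d &
    forall x' xb' u', N i (x' - x) < d ->
      XI_norm N (fun j => xb' j - xb j) < d -> Nu i (u' - u) < d ->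
      N i (fi x' xb' u' - fi x xb u) < eps.

Definition netf (n p : nat -> nat) (I : nat -> seq nat)
  (f : forall i, 'rV[R]_(n i) -> XI n I i -> 'rV[R]_(p i) -> 'rV[R]_(n i))
  (x : forall i, 'rV[R]_(n i)) (u : forall i, 'rV[R]_(p i)) :
  forall i, 'rV[R]_(n i) :=
  fun i => f i (x i) (fun j => x (val j)) (u i).

(* membership in the l^infty-type spaces X and U *)
Definition bounded_seq (m : nat -> nat) (N : forall i, 'rV[R]_(m i) -> R)
  (x : forall i, 'rV[R]_(m i)) : Prop :=
  exists M : R, forall i, N i (x i) <= M.

Definition well_posed (n p : nat -> nat) (I : nat -> seq nat)
  (N : forall i, 'rV[R]_(n i) -> R) (Nu : forall i, 'rV[R]_(p i) -> R)
  (f : forall i, 'rV[R]_(n i) -> XI n I i -> 'rV[R]_(p i) -> 'rV[R]_(n i))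
  : Prop :=
  forall x u, bounded_seq N x -> bounded_seq Nu u -> bounded_seq N (netf f x u).

End NetworkDefs.

From mathcomp Require Import all_boot all_order all_algebra.
From mathcomp Require Import all_classical all_reals all_analysis.
Import Order.TTheory GRing.Theory Num.Theory.
Import numFieldNormedType.Exports.
Local Open Scope classical_set_scope.
Local Open Scope ring_scope.

(** If every A_i lies in the ball of radius C, then |z|_{A_i} and |z| differ
   by at most C. Hence for |x_i| <= M and |u_i| <= M' the growth bound gives
   |f(x,u)_i|_{A_i} <= k1(M + C) + k2(M + C) + k2(M') uniformly in i (in case
   (b) because |x̄_i|_{A(I_i)} <= |x̄_i| + C), and so |f(x,u)_i| is bounded by
   that quantity plus C. *)

Section InfNonneg.
Context {R : realType}.

Lemma inf_ge0 (S : set R) : (forall x, S x -> 0 <= x) -> 0 <= inf S.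
Proof.
move=> S_ge0; have [[y Sy]|/set0P/negP] := pselect (S !=set0).
  by apply: lb_le_inf; [exists y | move=> z /S_ge0].
by rewrite negbK => /eqP ->; rewrite inf0.
Qed.

Lemma inf_le_ge0 (S : set R) x : (forall y, S y -> 0 <= y) -> S x -> inf S <= x.
Proof. by move=> S_ge0 Sx; apply: ge_inf => //; exists 0 => y /S_ge0. Qed.

End InfNonneg.

Lemma K_inf_le {R : realType} (k : R -> R) (a b : R) :
  K_inf k -> 0 <= a -> a <= b -> k a <= k b.
Proof.
case=> _ _ k_incr _ a_ge0; rewrite le_eqVlt => /orP[/eqP -> // | ab].
exact/ltW/k_incr.
Qed.

Section NormDistance.
Context {R : realType} {m : nat} {Nm : 'rV[R]_m -> R}.
Hypothesis normNm : is_norm Nm.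

Lemma is_norm_ge0 z : 0 <= Nm z.
Proof. by case: normNm. Qed.

Lemma is_normN z : Nm (- z) = Nm z.
Proof.
case: normNm => _ _ normZ _.
by rewrite -scaleN1r normZ normrN normr1 mul1r.
Qed.

Lemma is_norm_subr_le z y : Nm (z - y) <= Nm z + Nm y.
Proof. by case: normNm => _ _ _ normD; rewrite -(is_normN y) normD. Qed.

Lemma dist_set_ge0 (A : set 'rV[R]_m) z : 0 <= dist_set Nm A z.
Proof. by apply: inf_ge0 => _ [y _ <-]; apply: is_norm_ge0. Qed.

Context {A : set 'rV[R]_m} {C : R}.
Hypotheses (A_neq0 : A !=set0) (A_le : forall y, A y -> Nm y <= C).

Lemma norm_bound_ge0 : 0 <= C.
Proof. by case: A_neq0 => y /A_le; apply: le_trans; apply: is_norm_ge0. Qed.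

Lemma dist_set_le_norm z : dist_set Nm A z <= Nm z + C.
Proof.
case: A_neq0 => y Ay; apply: (@le_trans _ _ (Nm (z - y))).
  by apply: inf_le_ge0; [move=> _ [w _ <-]; apply: is_norm_ge0 | exists y].
by apply: le_trans (is_norm_subr_le z y) _; rewrite lerD2l A_le.
Qed.

Lemma norm_le_dist_set z : Nm z <= dist_set Nm A z + C.
Proof.
rewrite -lerBlDr; apply: lb_le_inf.
  by case: A_neq0 => y Ay; exists (Nm (z - y)), y.
move=> _ [y Ay <-]; rewrite lerBlDr.
case: normNm => _ _ _ normD.
rewrite -{1}(subrK y z); apply: le_trans (normD _ _) _.
by rewrite lerD2l A_le.
Qed.

End NormDistance.

Section InterconnectionNorm.
Context {R : realType} {n : nat -> nat} {I : nat -> seq nat}.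
Context {N : forall i, 'rV[R]_(n i) -> R}.
Hypothesis normN : forall i, is_norm (N i).

Lemma XI_norm_ge0 {i} (xb : XI n I i) : 0 <= XI_norm N xb.
Proof. by rewrite /XI_norm bigmax_idl le_max lexx. Qed.

Lemma XI_norm_le {i} (xb : XI n I i) (M : R) :
  0 <= M -> (forall j, N (val j) (xb j) <= M) -> XI_norm N xb <= M.
Proof. by move=> M_ge0 xb_le; apply: bigmax_le. Qed.

Context {A : forall i, set 'rV[R]_(n i)} {C : R}.
Hypotheses (A_neq0 : forall i, A i !=set0) (A_le : forall i z, A i z -> N i z <= C).

Lemma XI_dist_ge0 {i} (xb : XI n I i) : 0 <= XI_dist N A xb.
Proof. by apply: inf_ge0 => _ [z _ <-]; apply: XI_norm_ge0. Qed.

Lemma XI_dist_le {i} (xb : XI n I i) (M : R) :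
  0 <= M -> (forall j, N (val j) (xb j) <= M) -> XI_dist N A xb <= M + C.
Proof.
move=> M_ge0 xb_le.
pose z : XI n I i := fun j => xget 0 (A (val j)).
have Az j : A (val j) (z j) by apply: xgetPex; apply: A_neq0.
have C_ge0 := norm_bound_ge0 (normN 0) (A_neq0 0) (A_le 0).
apply: (@le_trans _ _ (XI_norm N (fun j => xb j - z j))).
  apply: inf_le_ge0; last by exists z.
  by move=> _ [w _ <-]; apply: XI_norm_ge0.
apply: XI_norm_le => [|j]; first by rewrite addr_ge0.
apply: le_trans (is_norm_subr_le (normN _) _ _) _.
exact: lerD (xb_le j) (A_le _ _ (Az j)).
Qed.

End InterconnectionNorm.

Section WellPosedness.
Context {R : realType} {n p : nat -> nat} {I : nat -> seq nat}.
Context {N : forall i, 'rV[R]_(n i) -> R} {Nu : forall i, 'rV[R]_(p i) -> R}.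
Context {f : forall i, 'rV[R]_(n i) -> @XI R n I i -> 'rV[R]_(p i) -> 'rV[R]_(n i)}.
Context {A : forall i, set 'rV[R]_(n i)} {C : R}.
Hypotheses (normN : forall i, is_norm (N i)) (normNu : forall i, is_norm (Nu i)).
Hypotheses (A_neq0 : forall i, A i !=set0) (A_le : forall i z, A i z -> N i z <= C).

Lemma well_posed_of_dist_bound {k1 k2 : R -> R} {g : forall i, @XI R n I i -> R} :
  K_inf k1 -> K_inf k2 ->
  (forall i xb, 0 <= g i xb) ->
  (forall i (xb : XI n I i) M,
     0 <= M -> (forall j, N (val j) (xb j) <= M) -> g i xb <= M + C) ->
  (forall i x xb u, dist_set (N i) (A i) (f i x xb u) <=
     k1 (dist_set (N i) (A i) x) + k2 (g i xb) + k2 (Nu i u)) ->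
  well_posed N Nu f.
Proof.
move=> K1 K2 g_ge0 g_le f_dist x u [Mx x_le] [Mu u_le].
have Mx_ge0 : 0 <= Mx := le_trans (is_norm_ge0 (normN 0) (x 0)) (x_le 0).
have C_ge0 := norm_bound_ge0 (normN 0) (A_neq0 0) (A_le 0).
exists (k1 (Mx + C) + k2 (Mx + C) + k2 Mu + C) => i.
apply: le_trans (norm_le_dist_set (normN i) (A_neq0 i) (A_le i) _) _.
rewrite lerD2r; apply: le_trans (f_dist _ _ _ _) _.
rewrite !lerD //; apply: K_inf_le => //.
- exact: dist_set_ge0.
- apply: le_trans (dist_set_le_norm (normN i) (A_neq0 i) (A_le i) _) _.
  by rewrite lerD2r.
- by apply: g_le => // j; apply: x_le.
- exact: is_norm_ge0.
Qed.

End WellPosedness.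

Theorem lemma4 (R : realType) (n p : nat -> nat)
  (N : forall i, 'rV[R]_(n i) -> R) (Nu : forall i, 'rV[R]_(p i) -> R)
  (I : nat -> seq nat)
  (f : forall i, 'rV[R]_(n i) -> XI n I i -> 'rV[R]_(p i) -> 'rV[R]_(n i))
  (A : forall i, set 'rV[R]_(n i)) :
  (forall i, (0 < n i)%N) -> (forall i, (0 < p i)%N) ->
  (forall i, is_norm (N i)) -> (forall i, is_norm (Nu i)) ->
  (forall i, i \notin I i) ->
  (forall i, finite_set [set j | i \in I j]) ->
  (forall i, fi_continuous N Nu (f i)) ->
  (forall i, A i !=set0) -> (forall i, closed (A i)) ->
  (exists k1 k2 : R -> R, K_inf k1 /\ K_inf k2 /\
     ((forall i x xb u,
        dist_set (N i) (A i) (f i x xb u) <=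
          k1 (dist_set (N i) (A i) x) + k2 (XI_norm N xb) + k2 (Nu i u)) \/
      (forall i x xb u,
        dist_set (N i) (A i) (f i x xb u) <=
          k1 (dist_set (N i) (A i) x) + k2 (XI_dist N A xb) + k2 (Nu i u)))) ->
  (exists2 C : R, 0 < C & forall i z, A i z -> N i z <= C) ->
  well_posed N Nu f.
Proof.
move=> _ _ normN normNu _ _ _ A_neq0 _ [k1 [k2 [K1 [K2 [f_dist|f_dist]]]]].
  move=> [C C_gt0 A_le].
  apply: (well_posed_of_dist_bound normN normNu A_neq0 A_le K1 K2 _ _ f_dist).
    by move=> i xb; apply: XI_norm_ge0.
  move=> i xb M M_ge0 xb_le /=; apply: le_trans (XI_norm_le _ _ M_ge0 xb_le) _.
  by rewrite lerDl; apply: ltW.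
move=> [C _ A_le].
apply: (well_posed_of_dist_bound normN normNu A_neq0 A_le K1 K2 _ _ f_dist).
  by move=> i xb; apply: XI_dist_ge0.
by move=> i xb M; apply: XI_dist_le.
Qed.
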